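(* Let $H$ be a monoid in $\mathcal{C}_d$ with $d \ge 3$. If the convex cone generated by $H$ in the $\mathbb{Q}$-vector space $\mathbb{Q}\otimes_{\mathbb{Z}}\mathrm{gp}(H)$ is polyhedral, then the elasticity $\rho(H)$ is either a rational number or $\infty$.
   Context: Monoids are commutative, cancellative, reduced. $\mathrm{gp}(H)$ is the Grothendieck group of $H$; $\mathcal{C}_d$ is the collection of all rank-$d$ submonoids of free commutative monoids of finite rank (rank = rank of $\mathrm{gp}(H)$); such monoids are atomic. The cone generated by $H$ is the set of all finite nonnegative rational linear combinations of elements of $H$; a convex cone is polyhedral if it has only finitely many faces (equivalently, is finitely generated as a cone). For nonzero $x\in H$, $\mathsf{L}(x)$ is the set of all $n$ such that $x$ is a sum of $n$ atoms, $\rho(x)=\sup\mathsf{L}(x)/\inf\mathsf{L}(x)$, and $\rho(H)=\sup\{\rho(x)\mid x\in H\setminus\{0\}\}$. *)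

From HB Require Import structures.
From mathcomp Require Import all_boot all_order all_algebra.
From mathcomp Require Import boolp classical_sets reals constructive_ereal ereal.

Set Implicit Arguments.
Unset Strict Implicit.
Unset Printing Implicit Defensive.

Import Order.TTheory GRing.Theory Num.Theory.
Local Open Scope classical_set_scope.
Local Open Scope ring_scope.

Definition vzero (n : nat) : {ffun 'I_n -> nat} := [ffun => 0%N].
Definition vadd (n : nat) (a b : {ffun 'I_n -> nat}) : {ffun 'I_n -> nat} :=
  [ffun i => (a i + b i)%N].
Definition vsum (n : nat) (s : seq {ffun 'I_n -> nat}) : {ffun 'I_n -> nat} :=
  foldr (@vadd n) (vzero n) s.

Definition submonoid (n : nat) (H : set {ffun 'I_n -> nat}) : Prop :=
  H (vzero n) /\ (forall a b, H a -> H b -> H (vadd a b)).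

Definition atom (n : nat) (H : set {ffun 'I_n -> nat}) (x : {ffun 'I_n -> nat}) : Prop :=
  H x /\ x <> vzero n /\
  (forall a b, H a -> H b -> x = vadd a b -> a = vzero n \/ b = vzero n).

Definition lengths (n : nat) (H : set {ffun 'I_n -> nat}) (x : {ffun 'I_n -> nat}) : set nat :=
  [set k | exists s : seq {ffun 'I_n -> nat},
      size s = k /\ (forall a, a \in s -> atom H a) /\ vsum s = x].

Definition elast_elt (R : realType) (n : nat) (H : set {ffun 'I_n -> nat})
    (x : {ffun 'I_n -> nat}) : R :=
  sup [set (k%:R : R) | k in lengths H x] / inf [set (k%:R : R) | k in lengths H x].

Definition elasticity (R : realType) (n : nat) (H : set {ffun 'I_n -> nat}) : \bar R :=
  ereal_sup [set (elast_elt R H x)%:E | x in [set y | H y /\ y <> vzero n]].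

Definition embed (n : nat) (a : {ffun 'I_n -> nat}) : 'rV[rat]_n :=
  \row_i ((a i)%:R : rat).

(** gp(H), realized inside Q^n as the set of differences of elements of H. *)
Definition gp (n : nat) (H : set {ffun 'I_n -> nat}) : set 'rV[rat]_n :=
  [set embed a - embed b | a in H & b in H].

(** rank of gp(H) = maximal number of (Z-, equivalently Q-) linearly
    independent elements of gp(H). *)
Definition gp_rank_is (n : nat) (H : set {ffun 'I_n -> nat}) (d : nat) : Prop :=
  (exists s : seq 'rV[rat]_n, size s = d /\ (forall v, v \in s -> gp H v) /\ free s) /\
  (forall s : seq 'rV[rat]_n, (forall v, v \in s -> gp H v) -> free s -> (size s <= d)%N).

Definition conic_hull (n : nat) (S : set 'rV[rat]_n) : set 'rV[rat]_n :=
  [set v | exists (k : nat) (c : 'I_k -> rat) (g : 'I_k -> 'rV[rat]_n),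
      (forall i, 0 <= c i /\ S (g i)) /\ v = \sum_(i < k) c i *: g i].

(** The cone generated by H in Q (x) gp(H) = Q-span of H in Q^n. *)
Definition cone_of (n : nat) (H : set {ffun 'I_n -> nat}) : set 'rV[rat]_n :=
  conic_hull (@embed n @` H).

(** A convex cone is polyhedral iff it is finitely generated as a cone. *)
Definition polyhedral (n : nat) (C : set 'rV[rat]_n) : Prop :=
  exists g : seq 'rV[rat]_n, C = conic_hull [set v | v \in g].

From HB Require Import structures.
From mathcomp Require Import all_boot all_order all_algebra.
From mathcomp Require Import boolp classical_sets reals constructive_ereal ereal.
From mathcomp Require Import zify ring lra.

Set Implicit Arguments.
Unset Strict Implicit.
Unset Printing Implicit Defensive.

Import Order.TTheory GRing.Theory Num.Theory.

(* If the atoms of H have bounded norm, they lie in a finite box, factorizations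
   are multiplicity vectors on it, and a relation is a pair of factorizations of
   one element.  Every relation splits into minimal ones, so its length ratio is
   at most the largest ratio of a minimal relation; that maximum exists because,
   by Dickson's lemma, minimal relations cannot carry a strictly increasing
   sequence of ratios.  Hence rho(H) is attained, and rational.
   If the atoms have unbounded norm, polyhedrality of the cone gives M such that
   a positive multiple D a of each a in H is a sum of nonzero elements of norm at
   most M.  For an atom a, D a then has factorizations of lengths D and at least
   D |a| / M, so rho(H) >= |a| / M is unbounded.
   The rank hypothesis only serves to make H nontrivial. *)

Section Vectors.
Variable n : nat.
Implicit Types (a b z : {ffun 'I_n -> nat}) (s : seq {ffun 'I_n -> nat}).

Definition vnorm a : nat := \sum_i a i.

Lemma vsumE s i : vsum s i = \sum_(a <- s) a i.
Proof.
elim: s => [|a s IH]; first by rewrite ffunE big_nil.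
by rewrite /= ffunE big_cons IH.
Qed.

Lemma vsum_cat s1 s2 : vsum (s1 ++ s2) = vadd (vsum s1) (vsum s2).
Proof. by apply/ffunP => i; rewrite ffunE !vsumE big_cat. Qed.

Lemma vnorm_vzero : vnorm (vzero n) = 0.
Proof. by rewrite /vnorm big1 // => i _; rewrite ffunE. Qed.

Lemma vnorm_vadd a b : vnorm (vadd a b) = vnorm a + vnorm b.
Proof. by rewrite /vnorm -big_split; apply: eq_bigr => i _; rewrite ffunE. Qed.

Lemma vnorm_vsum s : vnorm (vsum s) = \sum_(a <- s) vnorm a.
Proof.
elim: s => [|a s IH]; first by rewrite big_nil vnorm_vzero.
by rewrite big_cons /= vnorm_vadd IH.
Qed.

Lemma vnorm_eq0 a : (vnorm a == 0) = (a == vzero n).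
Proof.
rewrite /vnorm sum_nat_eq0; apply/forallP/eqP => [a0|-> i]; last by rewrite ffunE.
by apply/ffunP => i; rewrite ffunE; apply/eqP/a0.
Qed.

Lemma vnorm_vsum_le M s :
  (forall a, a \in s -> vnorm a <= M) -> vnorm (vsum s) <= M * size s.
Proof.
move=> sM; rewrite vnorm_vsum -sum1_size big_distrr /= !big_seq.
by apply: leq_sum => a /sM; rewrite muln1.
Qed.

Lemma vnorm_vsum_nseq D a : vnorm (vsum (nseq D a)) = D * vnorm a.
Proof. by rewrite vnorm_vsum big_nseq iter_addn_0 mulnC. Qed.

Local Open Scope ring_scope.

Lemma embed_vzero : embed (vzero n) = 0.
Proof. by apply/rowP => i; rewrite !mxE ffunE. Qed.

Lemma embed_vadd a b : embed (vadd a b) = embed a + embed b.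
Proof. by apply/rowP => i; rewrite !mxE ffunE natrD. Qed.

Lemma embed_inj : injective (@embed n).
Proof.
move=> a b /rowP eab; apply/ffunP => i.
by have /eqP := eab i; rewrite !mxE eqr_nat => /eqP.
Qed.

Lemma embed_vsum_nseq D a : embed (vsum (nseq D a)) = D%:R *: embed a.
Proof.
elim: D => [|D IH] /=; first by rewrite embed_vzero scale0r.
by rewrite embed_vadd IH mulrS scalerDl scale1r.
Qed.

Lemma embed_vsum_flatten_nseq D s :
  embed (vsum (flatten (nseq D s))) = D%:R *: embed (vsum s).
Proof.
elim: D => [|D IH] /=; first by rewrite embed_vzero scale0r.
by rewrite vsum_cat embed_vadd IH mulrS scalerDl scale1r.
Qed.

End Vectors.

Section Factorizations.
Variables (n : nat) (H : set {ffun 'I_n -> nat}).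
Hypothesis sH : submonoid H.
Implicit Types (a b z : {ffun 'I_n -> nat}) (s : seq {ffun 'I_n -> nat}).

Lemma submonoid_vsum s : (forall a, a \in s -> H a) -> H (vsum s).
Proof.
elim: s => [|a s IH] s_H /=; first exact: sH.1.
apply: sH.2; first by apply: s_H; rewrite mem_head.
by apply: IH => b bs; apply: s_H; rewrite inE bs orbT.
Qed.

Lemma atom_vnorm_gt0 a : atom H a -> 0 < vnorm a.
Proof. by move=> [_ [a0 _]]; rewrite lt0n vnorm_eq0; apply/eqP. Qed.

Lemma factorization_exists z : H z ->
  exists s, (forall a, a \in s -> atom H a) /\ vsum s = z.
Proof.
move: {2}(vnorm z) (leqnn (vnorm z)) => m; elim: m z => [|m IH] z zm Hz.
  by exists [::]; split => //; apply/esym/eqP; rewrite -vnorm_eq0 -leqn0.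
have [z0|z0] := eqVneq z (vzero n); first by exists [::]; rewrite z0.
have [az|not_atom] := pselect (atom H z).
  exists [:: z]; split; first by move=> a; rewrite inE => /eqP ->.
  by apply/ffunP => i; rewrite /= !ffunE addn0.
have [a [b [Ha Hb zab a0 b0]]] :
    exists a b, [/\ H a, H b, z = vadd a b, a <> vzero n & b <> vzero n].
  apply: contra_notP not_atom => nsplit; split => //; split; first exact/eqP.
  move=> a b Ha Hb zab; apply: contrapT => /not_orP [a0 b0].
  by apply: nsplit; exists a, b.
have a_gt0 : 0 < vnorm a by rewrite lt0n vnorm_eq0; apply/eqP.
have b_gt0 : 0 < vnorm b by rewrite lt0n vnorm_eq0; apply/eqP.
move: zm; rewrite zab vnorm_vadd => le_m.
have [sa [sa_atoms <-]] := IH a ltac:(lia) Ha.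
have [sb [sb_atoms <-]] := IH b ltac:(lia) Hb.
exists (sa ++ sb); split; last exact: vsum_cat.
by move=> c; rewrite mem_cat => /orP [/sa_atoms|/sb_atoms].
Qed.

Lemma lengths_le_vnorm z k : lengths H z k -> k <= vnorm z.
Proof.
move=> [s [<- [s_atoms <-]]]; rewrite vnorm_vsum -sum1_size !big_seq.
by apply: leq_sum => a /s_atoms /atom_vnorm_gt0.
Qed.

Lemma lengths_gt0 z k : z <> vzero n -> lengths H z k -> 0 < k.
Proof. by move=> z0 [[|a s] [<- [_ zs]]] //; case: z0; rewrite -zs. Qed.

Lemma refine_to_atoms s : (forall h, h \in s -> H h /\ h <> vzero n) ->
  exists s', [/\ forall a, a \in s' -> atom H a, vsum s' = vsum s & size s <= size s'].
Proof.
elim: s => [|h s IH] hs; first by exists [::].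
have [Hh h0] := hs h (mem_head _ _).
have [sh [sh_atoms sh_h]] := factorization_exists Hh.
have sh_gt0 : 0 < size sh by apply: lengths_gt0 h0 _; exists sh.
have [s' [s'_atoms s's le_s]] := IH (fun x xs => hs x (mem_behead (s:=h::s) xs)).
exists (sh ++ s'); split.
- by move=> c; rewrite mem_cat => /orP [/sh_atoms|/s'_atoms].
- by rewrite vsum_cat sh_h s's.
- by rewrite size_cat /=; lia.
Qed.

End Factorizations.

Section ElementElasticity.
Variables (R : realType) (n : nat) (H : set {ffun 'I_n -> nat}).
Implicit Types (z : {ffun 'I_n -> nat}).
Local Open Scope ring_scope.
Local Open Scope classical_set_scope.

Let lengthsR z := [set (k%:R : R) | k in lengths H z].

Lemma ratio_le_elast_elt z k1 k2 : z <> vzero n ->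
  lengths H z k1 -> lengths H z k2 -> k1%:R / k2%:R <= elast_elt R H z.
Proof.
move=> z0 l1 l2; rewrite /elast_elt -/(lengthsR z).
have ub : has_ubound (lengthsR z).
  by exists (vnorm z)%:R => _ [k lk <-]; rewrite ler_nat (lengths_le_vnorm lk).
have sup1 : k1%:R <= sup (lengthsR z) by apply: ub_le_sup => //; exists k1.
have inf2 : inf (lengthsR z) <= k2%:R.
  by apply: ge_inf; [exists 0 => _ [k _ <-] | exists k2].
have inf1 : 1 <= inf (lengthsR z).
  apply: lb_le_inf; first by exists k2%:R, k2.
  by move=> _ [k lk <-]; rewrite ler1n (lengths_gt0 z0 lk).
have k2_gt0 : 0 < k2%:R :> R by lra.
rewrite ler_pdivrMr // mulrAC ler_pdivlMr; last by lra.
by apply: ler_pM => //; lra.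
Qed.

Lemma elast_elt_le z r : H z -> z <> vzero n -> 0 <= r ->
  (forall k1 k2, lengths H z k1 -> lengths H z k2 -> k1%:R <= r * k2%:R) ->
  elast_elt R H z <= r.
Proof.
move=> Hz z0 r_ge0 hr; rewrite /elast_elt -/(lengthsR z).
have [s [s_atoms zs]] := factorization_exists Hz.
have ls : lengths H z (size s) by exists s.
have ne : lengthsR z !=set0 by exists (size s)%:R, (size s).
have ub : has_ubound (lengthsR z) by exists (r * (size s)%:R) => _ [k lk <-]; apply: hr.
have inf1 : 1 <= inf (lengthsR z).
  by apply: lb_le_inf => // _ [k lk <-]; rewrite ler1n (lengths_gt0 z0 lk).
have sup_le k2 : lengths H z k2 -> sup (lengthsR z) <= r * k2%:R.
  by move=> lk2; apply: ge_sup => // _ [k1 lk1 <-]; apply: hr.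
have : sup (lengthsR z) <= r * inf (lengthsR z).
  have [r_gt0|r_le0] := ltrP 0 r; last first.
    have r0 : r = 0 by lra.
    by have := sup_le _ ls; rewrite r0 !mul0r.
  rewrite mulrC -ler_pdivrMr //; apply: lb_le_inf => // _ [k lk <-].
  by rewrite ler_pdivrMr // mulrC; apply: sup_le.
by rewrite ler_pdivrMr; lra.
Qed.

End ElementElasticity.

Lemma rat_ge0_frac (c : rat) : (0 <= c)%R ->
  exists p q : nat, (0 < q)%N /\ c = (p%:R / q%:R)%R.
Proof.
move=> c0; exists `|numq c|%N, `|denq c|%N; split; first by rewrite absz_gt0 denq_neq0.
by rewrite !natr_absz !ger0_norm ?numq_ge0 ?divq_num_den // ltW // denq_gt0.
Qed.

Lemma mem_conic_hull n (S : set 'rV[rat]_n) v : S v -> conic_hull S v.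
Proof.
move=> Sv; exists 1%N, (fun _ => 1%R), (fun _ => v); split => //.
by rewrite big_ord1 scale1r.
Qed.

Section PolyhedralCone.
Variables (n : nat) (H : set {ffun 'I_n -> nat}).
Implicit Types (h : {ffun 'I_n -> nat}) (u v : 'rV[rat]_n).
Local Open Scope ring_scope.

(* The integral form of [u \in cone (H \cap {|h| <= M})]; zero summands are excluded. *)
Definition in_small_cone (M : nat) u := exists2 D : nat, (0 < D)%N &
  exists2 s, (forall h, h \in s -> [/\ H h, h <> vzero n & (vnorm h <= M)%N]) &
    D%:R *: u = embed (vsum s).

Lemma in_small_cone0 M : in_small_cone M 0.
Proof. by exists 1%N => //; exists [::] => //; rewrite embed_vzero scaler0. Qed.

Lemma in_small_cone_embed M h : H h -> (vnorm h <= M)%N -> in_small_cone M (embed h).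
Proof.
move=> Hh hM; have [->|h0] := eqVneq h (vzero n).
  by rewrite embed_vzero; apply: in_small_cone0.
exists 1%N => //; exists [:: h].
  by move=> x; rewrite inE => /eqP ->; split => //; apply/eqP.
by rewrite scale1r /= embed_vadd embed_vzero addr0.
Qed.

Lemma in_small_cone_le M M' u : (M <= M')%N -> in_small_cone M u -> in_small_cone M' u.
Proof.
move=> MM' [D D_gt0 [s hs Du]]; exists D => //; exists s => // h /hs [Hh h0 hM].
by split => //; apply: leq_trans MM'.
Qed.

Lemma in_small_coneZ M c u : 0 <= c -> in_small_cone M u -> in_small_cone M (c *: u).
Proof.
move=> /rat_ge0_frac [p [q [q_gt0 ->]]] [D D_gt0 [s hs Du]].
exists (D * q)%N; first by rewrite muln_gt0 D_gt0.
exists (flatten (nseq p s)).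
  by move=> h /flattenP [s' /nseqP [-> _]] /hs.
rewrite embed_vsum_flatten_nseq -Du !scalerA; congr (_ *: _).
have q0 : q%:R != 0 :> rat by rewrite pnatr_eq0 -lt0n.
by rewrite natrM; field.
Qed.

Lemma in_small_coneD M u v : in_small_cone M u -> in_small_cone M v -> in_small_cone M (u + v).
Proof.
move=> [Du Du_gt0 [su hsu eu]] [Dv Dv_gt0 [sv hsv ev]].
exists (Du * Dv)%N; first by rewrite muln_gt0 Du_gt0.
exists (flatten (nseq Dv su) ++ flatten (nseq Du sv)).
  move=> h; rewrite mem_cat => /orP [] /flattenP [s' /nseqP [-> _]].
  - exact: hsu.
  - exact: hsv.
rewrite vsum_cat embed_vadd !embed_vsum_flatten_nseq -eu -ev !scalerA scalerDr natrM.
by rewrite mulrC.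
Qed.

Lemma in_small_cone_sum M k (c : 'I_k -> rat) (w : 'I_k -> 'rV[rat]_n) :
  (forall i, 0 <= c i) -> (forall i, in_small_cone M (w i)) ->
  in_small_cone M (\sum_(i < k) c i *: w i).
Proof.
move=> c_ge0 hw; apply: (big_ind (in_small_cone M)).
- exact: in_small_cone0.
- exact: in_small_coneD.
- by move=> i _; apply: in_small_coneZ.
Qed.

Lemma cone_of_small_cone v : cone_of H v -> exists M, in_small_cone M v.
Proof.
move=> [k [c [w [hcw ->]]]].
have /choice [f hf] : forall i, exists h, H h /\ embed h = w i.
  by move=> i; have [_ [h Hh <-]] := hcw i; exists h.
exists (\max_(i < k) vnorm (f i))%N; apply: in_small_cone_sum => i; first by case: (hcw i).
by case: (hf i) => Hf <-; apply: in_small_cone_embed => //; apply: leq_bigmax.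
Qed.

Lemma small_cone_uniform (g : seq 'rV[rat]_n) :
  (forall v, v \in g -> exists M, in_small_cone M v) ->
  exists M, forall v, v \in g -> in_small_cone M v.
Proof.
elim: g => [|v g IH] g_small; first by exists 0%N.
have [Mv hv] := g_small v (mem_head _ _).
have [Mg hg] := IH (fun w wg => g_small w (mem_behead (s:=v::g) wg)).
exists (maxn Mv Mg) => w; rewrite inE => /orP [/eqP ->|wg].
  by apply: in_small_cone_le hv; apply: leq_maxl.
by apply: in_small_cone_le (hg w wg); apply: leq_maxr.
Qed.

Lemma polyhedral_small_cone : polyhedral (cone_of H) ->
  exists2 M, (0 < M)%N & forall a, H a -> in_small_cone M (embed a).
Proof.
move=> [g hg]; have [M g_small] : exists M, forall v, v \in g -> in_small_cone M v.
  apply: small_cone_uniform => v vg; apply: cone_of_small_cone.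
  by rewrite hg; apply: mem_conic_hull.
exists M.+1 => // a Ha; have : cone_of H (embed a) by apply: mem_conic_hull; exists a.
rewrite hg => -[k [c [w [hcw ->]]]]; apply: in_small_cone_sum => i; first by case: (hcw i).
by apply: in_small_cone_le (g_small _ (hcw i).2).
Qed.

End PolyhedralCone.

Section UnboundedAtoms.
Variables (R : realType) (n : nat) (H : set {ffun 'I_n -> nat}).
Hypothesis sH : submonoid H.
Local Open Scope ring_scope.
Local Open Scope classical_set_scope.

(* [D a] factors as [a, ..., a] into [D] atoms and, refining a small-cone
   decomposition of [D a], into at least [D |a| / M] atoms. *)
Lemma elast_elt_ge_atom M a : (0 < M)%N ->
  (forall b, H b -> in_small_cone H M (embed b)) -> atom H a ->
  exists2 z, H z /\ z <> vzero n & (vnorm a)%:R / M%:R <= elast_elt R H z.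
Proof.
move=> M_gt0 small aa; have [Ha _] := aa; have a_gt0 := atom_vnorm_gt0 aa.
have [D D_gt0 [s hs Da]] := small a Ha.
set z := vsum (nseq D a).
have zs : z = vsum s by apply: embed_inj; rewrite embed_vsum_nseq.
have z0 : z <> vzero n.
  by move=> z0; have := vnorm_vsum_nseq D a; rewrite -/z z0 vnorm_vzero; lia.
have Hz : H z by apply: (submonoid_vsum sH) => x /nseqP [->].
have hs' : forall h, h \in s -> H h /\ h <> vzero n by move=> h /hs [].
have [s' [s'_atoms s's le_s]] := refine_to_atoms hs'.
have l1 : lengths H z (size s') by exists s'; rewrite s's zs.
have l2 : lengths H z D.
  by exists (nseq D a); rewrite size_nseq; split => //; split => // x /nseqP [->].
exists z => //; apply: le_trans (ratio_le_elast_elt R z0 l1 l2).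
have le_Da : (D * vnorm a <= M * size s')%N.
  rewrite -vnorm_vsum_nseq -/z zs; apply: leq_trans (leq_mul (leqnn M) le_s).
  by apply: vnorm_vsum_le => h /hs [].
rewrite ler_pdivrMr ?ltr0n // mulrAC ler_pdivlMr ?ltr0n // -!natrM ler_nat.
by rewrite mulnC (mulnC (size s')).
Qed.

Lemma elasticity_unbounded_atoms : polyhedral (cone_of H) ->
  ~ (exists B, forall a, atom H a -> (vnorm a <= B)%N) -> elasticity R H = +oo%E.
Proof.
move=> /polyhedral_small_cone [M M_gt0 small] bounded.
have big_atom B : exists2 a, atom H a & (B < vnorm a)%N.
  apply: contra_notP bounded => no_big; exists B => a aa; rewrite leqNgt.
  by apply/negP => Ba; apply: no_big; exists a.
have elast_big (r : R) : exists2 z, H z /\ z <> vzero n & r < elast_elt R H z.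
  have [a aa Ba] := big_atom (Num.Def.trunc (r * M%:R)).
  have [z Pz hz] := elast_elt_ge_atom M_gt0 small aa.
  exists z => //; apply: lt_le_trans hz.
  rewrite ltr_pdivlMr ?ltr0n //; apply: lt_le_trans (truncnS_gt _) _.
  by rewrite ler_nat.
rewrite /elasticity -(image_comp _ EFin).
apply: hasNub_ereal_sup; last by have [z Pz _] := elast_big 0; exists (elast_elt R H z), z.
move=> [r ub]; have [z Pz zr] := elast_big r.
have : elast_elt R H z <= r by apply: ub; exists z.
by rewrite leNgt zr.
Qed.

End UnboundedAtoms.

Lemma exists_argmin_from (g : nat -> nat) i :
  exists j, i <= j /\ forall l, i <= l -> g j <= g l.
Proof.
have ex_val : exists v, `[< exists2 l, i <= l & g l = v >].
  by exists (g i); apply/asboolP; exists i.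
case: (ex_minnP ex_val) => v /asboolP [j ij <-] min_j; exists j; split => // l il.
by apply: min_j; apply/asboolP; exists l.
Qed.

Lemma monotone_subsequence (g : nat -> nat) :
  exists2 psi : nat -> nat, {homo psi : k l / k < l} & {homo g \o psi : k l / k <= l}.
Proof.
have [sel hsel] := choice (exists_argmin_from g).
pose fix psi k := sel (if k is k'.+1 then (psi k').+1 else 0).
have psi_mono : {homo psi : k l / k < l}.
  by apply: homo_ltn ltn_trans _ => k; apply: (hsel (psi k).+1).1.
exists psi => // -[|k] l kl /=; first exact: (hsel 0).2.
exact/(hsel (psi k).+1).2/psi_mono.
Qed.

Lemma dickson_subsequence (I : eqType) (F : nat -> I -> nat) (cs : seq I) :
  exists2 phi : nat -> nat, {homo phi : k l / k < l} &
    forall c, c \in cs -> {homo (fun k => F (phi k) c) : k l / k <= l}.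
Proof.
elim: cs => [|c cs [phi phi_mono F_mono]]; first by exists id.
have [psi psi_mono Fc_mono] := monotone_subsequence (fun k => F (phi k) c).
exists (phi \o psi) => [k l kl|c']; first exact/phi_mono/psi_mono.
rewrite inE => /orP [/eqP -> //|c'cs] k l kl.
exact/(F_mono c' c'cs)/ltnW_homo.
Qed.

Lemma dickson (I : finType) (F : nat -> I -> nat) :
  exists i j, i < j /\ forall c, F i c <= F j c.
Proof.
have [phi phi_mono F_mono] := dickson_subsequence F (enum I).
exists (phi 0), (phi 1); split; first exact: phi_mono.
by move=> c; apply: F_mono; rewrite ?mem_enum.
Qed.

Section MultiplicityVectors.
Variables (n B : nat) (H : set {ffun 'I_n -> nat}).
Hypothesis atom_le : forall a, atom H a -> vnorm a <= B.
Implicit Types (a : {ffun 'I_n -> nat}) (s : seq {ffun 'I_n -> nat}).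

(* All atoms lie in the finite box [0, B]^n, so a factorization is determined by
   its multiplicity vector [box -> nat]. *)
Definition box := {ffun 'I_n -> 'I_B.+1}.
Definition of_box (t : box) : {ffun 'I_n -> nat} := [ffun i => t i : nat].
Definition to_box a : box := [ffun i => inord (a i)].

Definition mval (x : box -> nat) : {ffun 'I_n -> nat} :=
  [ffun i => \sum_t x t * of_box t i].
Definition msize (x : box -> nat) : nat := \sum_t x t.
Definition atom_supported (x : box -> nat) := forall t, 0 < x t -> atom H (of_box t).
Definition mult s : box -> nat := fun t => count_mem (of_box t) s.
Definition mseq (x : box -> nat) := flatten [seq nseq (x t) (of_box t) | t <- enum box].

Lemma of_box_inj : injective of_box.
Proof.
move=> t t' /ffunP tt'; apply/ffunP => i; apply: val_inj.
by have := tt' i; rewrite !ffunE.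
Qed.

Lemma to_boxK a : atom H a -> of_box (to_box a) = a.
Proof.
move=> aa; apply/ffunP => i; rewrite !ffunE inordK // ltnS.
by apply: leq_trans (atom_le aa); rewrite /vnorm (bigD1 i) //= leq_addr.
Qed.

Lemma sum_mult_atom a (F : {ffun 'I_n -> nat} -> nat) : atom H a ->
  \sum_t (a == of_box t) * F (of_box t) = F a.
Proof.
move=> aa; rewrite (bigD1 (to_box a)) //= to_boxK // eqxx mul1n big1 ?addn0 // => t tnea.
case: eqP => // /esym; rewrite -{1}(to_boxK aa) => /of_box_inj eq_t.
by rewrite eq_t eqxx in tnea.
Qed.

Lemma mult_cons a s t : mult (a :: s) t = (a == of_box t) + mult s t.
Proof. by rewrite /mult /= eq_sym. Qed.

Lemma mval_mult s : (forall a, a \in s -> atom H a) -> mval (mult s) = vsum s.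
Proof.
move=> s_atoms; apply/ffunP => i; rewrite ffunE vsumE.
elim: s s_atoms => [|a s IH] s_atoms; first by rewrite big_nil big1.
under eq_bigr do rewrite mult_cons mulnDl.
rewrite big_split /= (sum_mult_atom (fun b => b i) (s_atoms a (mem_head a s))).
by rewrite big_cons IH // => b bs; apply: s_atoms; rewrite inE bs orbT.
Qed.

Lemma msize_mult s : (forall a, a \in s -> atom H a) -> msize (mult s) = size s.
Proof.
elim: s => [|a s IH] s_atoms; first by rewrite /msize big1.
rewrite /msize; under eq_bigr do rewrite mult_cons -[X in X + _]muln1.
rewrite big_split /= (sum_mult_atom (fun _ => 1) (s_atoms a (mem_head a s))).
by rewrite -/(msize _) IH // => b bs; apply: s_atoms; rewrite inE bs orbT.
Qed.

Lemma mult_supported s : (forall a, a \in s -> atom H a) -> atom_supported (mult s).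
Proof. by move=> s_atoms t; rewrite /mult -has_count => /hasP [a /s_atoms + /eqP <-]. Qed.

Lemma mseq_atoms x a : atom_supported x -> a \in mseq x -> atom H a.
Proof. by move=> x_supp /flattenP [_ /mapP [t _ ->]] /nseqP [-> /x_supp]. Qed.

Lemma vsum_mseq x : vsum (mseq x) = mval x.
Proof.
apply/ffunP => i; rewrite vsumE ffunE big_flatten big_map big_enum /=.
by apply: eq_bigr => t _; rewrite big_nseq iter_addn_0 mulnC.
Qed.

Lemma size_mseq x : size (mseq x) = msize x.
Proof.
rewrite -sum1_size big_flatten big_map big_enum /=.
by apply: eq_bigr => t _; rewrite big_nseq iter_addn_0 mul1n.
Qed.

Lemma msize_eq0 x : msize x = 0 -> forall t, x t = 0.
Proof. by move=> /eqP; rewrite /msize sum_nat_eq0 => /forallP x0 t; apply/eqP/x0. Qed.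

Lemma vnorm_mval x : vnorm (mval x) = \sum_t x t * vnorm (of_box t).
Proof.
rewrite /vnorm; under eq_bigr do rewrite ffunE.
by rewrite exchange_big; apply: eq_bigr => t _; rewrite big_distrr.
Qed.

Lemma msize_le_vnorm_mval x : atom_supported x ->
  msize x <= vnorm (mval x) <= B * msize x.
Proof.
move=> x_supp; rewrite vnorm_mval /msize big_distrr /=.
apply/andP; split; apply: leq_sum => t _; have [->|/x_supp xt] := posnP (x t) => //.
  by rewrite leq_pmulr // (atom_vnorm_gt0 xt).
by rewrite mulnC leq_mul2r atom_le ?orbT.
Qed.

End MultiplicityVectors.

Section Relations.
Variables (n B : nat) (H : set {ffun 'I_n -> nat}).
Hypothesis atom_le : forall a, atom H a -> vnorm a <= B.
Implicit Types (r m : (box n B -> nat) * (box n B -> nat)).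

Definition relation r :=
  [/\ atom_supported H r.1, atom_supported H r.2, mval r.1 = mval r.2 & 0 < msize r.2].

Definition rel_le r r' := forall t, r.1 t <= r'.1 t /\ r.2 t <= r'.2 t.

Definition minimal_relation m :=
  relation m /\ forall r, relation r -> rel_le r m -> rel_le m r.

Definition rel_sub r r' := (fun t => r.1 t - r'.1 t, fun t => r.2 t - r'.2 t).

Definition rel_ratio r : rat := ((msize r.1)%:R / (msize r.2)%:R)%R.

Lemma msize_sub (x x' : box n B -> nat) : (forall t, x' t <= x t) ->
  msize x = msize (fun t => x t - x' t) + msize x'.
Proof.
by move=> le_x; rewrite /msize -big_split; apply: eq_bigr => t _ /=; rewrite subnK.
Qed.

Lemma mval_sub (x x' : box n B -> nat) i : (forall t, x' t <= x t) ->
  mval x i = mval (fun t => x t - x' t) i + mval x' i.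
Proof.
by move=> le_x; rewrite !ffunE -big_split; apply: eq_bigr => t _ /=; rewrite -mulnDl subnK.
Qed.

Lemma rel_le_msize r r' :
  rel_le r r' -> msize r.1 <= msize r'.1 /\ msize r.2 <= msize r'.2.
Proof. by move=> le_r; split; apply: leq_sum => t _; case: (le_r t). Qed.

Lemma relation_msize_gt0 r : relation r -> 0 < msize r.1.
Proof.
move=> [supp1 supp2 e pos2].
have /andP [le2 _] := msize_le_vnorm_mval atom_le supp2.
have /andP [_ le1] := msize_le_vnorm_mval atom_le supp1.
by rewrite lt0n; apply/eqP => size1; move: le1; rewrite size1 muln0 e; lia.
Qed.

Lemma relation_sub r r' : relation r -> relation r' -> rel_le r' r -> ~ rel_le r r' ->
  relation (rel_sub r r').
Proof.
move=> [supp1 supp2 e pos2] [_ _ e' _] le_r' not_le_r.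
have le1 t : r'.1 t <= r.1 t by case: (le_r' t).
have le2 t : r'.2 t <= r.2 t by case: (le_r' t).
have supp1' : atom_supported H (rel_sub r r').1 by move=> t /= ?; apply: supp1; lia.
have supp2' : atom_supported H (rel_sub r r').2 by move=> t /= ?; apply: supp2; lia.
have e_sub : mval (rel_sub r r').1 = mval (rel_sub r r').2.
  apply/ffunP => i; have := mval_sub i le1; have := mval_sub i le2.
  by rewrite e e' => -> /eqP; rewrite eqn_add2r => /eqP.
split => //; rewrite lt0n; apply/eqP => size2; apply: not_le_r => t.
have /andP [_] := msize_le_vnorm_mval atom_le supp2'.
rewrite size2 muln0 leqn0 -e_sub => /eqP vnorm0.
have /andP [] := msize_le_vnorm_mval atom_le supp1'.
rewrite vnorm0 leqn0 => /eqP size1 _.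
by have := msize_eq0 size1 t; have := msize_eq0 size2 t; move: (le1 t) (le2 t) => /=; lia.
Qed.

Lemma relation_ind (P : (box n B -> nat) * (box n B -> nat) -> Prop) :
  (forall m, minimal_relation m -> P m) ->
  (forall r r', relation r' -> rel_le r' r -> relation (rel_sub r r') ->
     P r' -> P (rel_sub r r') -> P r) ->
  forall r, relation r -> P r.
Proof.
move=> P_min P_split r.
move: {2}(msize r.1 + msize r.2) (leqnn (msize r.1 + msize r.2)) => N.
elim: N r => [|N IH] r le_N rel_r; first by have := relation_msize_gt0 rel_r; lia.
have [|not_min] := pselect (minimal_relation r); first exact: P_min.
have [r' [rel_r' le_r' not_le_r]] : exists r', [/\ relation r', rel_le r' r & ~ rel_le r r'].
  apply: contra_notP not_min => none; split => // r' rel_r' le_r'.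
  by apply: contrapT => not_le_r; apply: none; exists r'.
have rel_sub_r := relation_sub rel_r rel_r' le_r' not_le_r.
have [e1 e2] : msize r.1 = msize (rel_sub r r').1 + msize r'.1 /\
               msize r.2 = msize (rel_sub r r').2 + msize r'.2.
  by split; apply: msize_sub => t; case: (le_r' t).
have pos' := relation_msize_gt0 rel_r'; have pos_sub := relation_msize_gt0 rel_sub_r.
apply: P_split rel_r' le_r' rel_sub_r (IH _ _ rel_r') (IH _ _ rel_sub_r); lia.
Qed.

Lemma exists_minimal_below r : relation r -> exists2 m, minimal_relation m & rel_le m r.
Proof.
apply: (@relation_ind (fun r => exists2 m, minimal_relation m & rel_le m r)).
  by move=> m min_m; exists m.
move=> {}r r' _ le_r' _ [m min_m le_m] _.
by exists m => // t; have := le_m t; have := le_r' t; lia.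
Qed.

Lemma relation_ratio_le (rho : rat) :
  (forall m, minimal_relation m -> ((msize m.1)%:R <= rho * (msize m.2)%:R)%R) ->
  forall r, relation r -> ((msize r.1)%:R <= rho * (msize r.2)%:R)%R.
Proof.
move=> rho_min.
apply: (@relation_ind (fun r => (msize r.1)%:R <= rho * (msize r.2)%:R)%R) => //.
move=> r r' _ le_r' _ le_r'_rho le_sub_rho.
have [-> ->] : msize r.1 = msize (rel_sub r r').1 + msize r'.1 /\
               msize r.2 = msize (rel_sub r r').2 + msize r'.2.
  by split; apply: msize_sub => t; case: (le_r' t).
by rewrite !natrD mulrDr lerD.
Qed.

(* By Dickson's lemma [chain i <= chain j] for some [i < j], and minimality of
   [chain j] turns this into equality of sizes. *)
Lemma minimal_relations_ratio_repeats (chain : nat -> (box n B -> nat) * (box n B -> nat)) :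
  (forall k, minimal_relation (chain k)) ->
  exists i j, i < j /\ rel_ratio (chain i) = rel_ratio (chain j).
Proof.
move=> min_chain.
pose F k (c : box n B + box n B) :=
  match c with inl t => (chain k).1 t | inr t => (chain k).2 t end.
have [i [j [lt_ij le_F]]] := dickson F.
have le_ij : rel_le (chain i) (chain j).
  by move=> t; split; [apply: (le_F (inl t)) | apply: (le_F (inr t))].
have le_ji := (min_chain j).2 _ (min_chain i).1 le_ij.
have [[le1 le2] [ge1 ge2]] := (rel_le_msize le_ij, rel_le_msize le_ji).
exists i, j; split => //; rewrite /rel_ratio.
by congr (_%:R / _%:R)%R; apply/anti_leq; rewrite ?le1 ?ge1 ?le2 ?ge2.
Qed.

Lemma exists_max_ratio r0 : relation r0 ->
  exists2 mx, minimal_relation mx &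
    forall m, minimal_relation m -> (rel_ratio m <= rel_ratio mx)%R.
Proof.
move=> /exists_minimal_below [m0 min_m0 _]; apply: contrapT => no_max.
have larger m : exists m',
    minimal_relation m -> minimal_relation m' /\ (rel_ratio m < rel_ratio m')%R.
  have [min_m|] := pselect (minimal_relation m); last by exists m.
  suff [m' min_m' lt_m'] : exists2 m', minimal_relation m' & (rel_ratio m < rel_ratio m')%R.
    by exists m'.
  apply: contra_notP no_max => no_larger; exists m => // m' min_m'.
  by rewrite leNgt; apply/negP => lt_m'; apply: no_larger; exists m'.
have [next hnext] := choice larger.
pose chain k := iter k next m0.
have min_chain k : minimal_relation (chain k) by elim: k => //= k /hnext [].
have [i [j [lt_ij eq_ratio]]] := minimal_relations_ratio_repeats min_chain.
have incr : {homo rel_ratio \o chain : k l / k < l >-> (k < l)%R}.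
  by apply: homo_ltn lt_trans _ => k; have [] := hnext _ (min_chain k).
by have := incr _ _ lt_ij; rewrite /= eq_ratio ltxx.
Qed.

End Relations.

Section BoundedAtoms.
Variables (R : realType) (n B : nat) (H : set {ffun 'I_n -> nat}).
Hypothesis sH : submonoid H.
Hypothesis atom_le : forall a, atom H a -> (vnorm a <= B)%N.
Implicit Types (z : {ffun 'I_n -> nat}) (s : seq {ffun 'I_n -> nat})
  (r : (box n B -> nat) * (box n B -> nat)).

Lemma relation_of_factorizations z s1 s2 : z <> vzero n ->
  (forall a, a \in s1 -> atom H a) -> (forall a, a \in s2 -> atom H a) ->
  vsum s1 = z -> vsum s2 = z -> relation H (mult (B:=B) s1, mult (B:=B) s2).
Proof.
move=> z0 s1_atoms s2_atoms s1z s2z; split => /=; [exact: mult_supported..| |].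
  by rewrite !(mval_mult atom_le) // s1z s2z.
have l2 : lengths H z (size s2) by exists s2.
by rewrite (msize_mult atom_le) // (lengths_gt0 z0 l2).
Qed.

Lemma relation_lengths r : relation H r ->
  [/\ H (mval r.1), mval r.1 <> vzero n,
      lengths H (mval r.1) (msize r.1) & lengths H (mval r.1) (msize r.2)].
Proof.
move=> rel_r; have [supp1 supp2 e _] := rel_r.
split.
- by rewrite -vsum_mseq; apply: (submonoid_vsum sH) => a /(mseq_atoms supp1) [].
- move/eqP; rewrite -vnorm_eq0 -leqn0; apply/negP; rewrite -ltnNge.
  have /andP [le1 _] := msize_le_vnorm_mval atom_le supp1.
  exact: leq_trans (relation_msize_gt0 atom_le rel_r) le1.
- exists (mseq r.1); rewrite size_mseq vsum_mseq.
  by split => //; split => // a /(mseq_atoms supp1).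
- exists (mseq r.2); rewrite size_mseq e vsum_mseq.
  by split => //; split => // a /(mseq_atoms supp2).
Qed.

Lemma elasticity_bounded_atoms z0 : H z0 -> z0 <> vzero n ->
  exists q : rat, elasticity R H = (ratr q : R)%:E.
Proof.
move=> Hz0 z00; have [s0 [s0_atoms s0z0]] := factorization_exists Hz0.
have [mx min_mx mx_max] :=
  exists_max_ratio atom_le (relation_of_factorizations z00 s0_atoms s0_atoms s0z0 s0z0).
have rel_le_mx r : relation H r -> ((msize r.1)%:R <= rel_ratio mx * (msize r.2)%:R)%R.
  apply: (relation_ratio_le atom_le) => m min_m; have [_ _ _ pos2] := min_m.1.
  have := mx_max m min_m.
  by rewrite /rel_ratio ler_pdivrMr ?ltr0n // mulrC.
exists (rel_ratio mx); apply/le_anti/andP; split.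
  apply: ge_ereal_sup => _ [z [Hz z_neq0] <-]; rewrite lee_fin.
  apply: (elast_elt_le Hz z_neq0); first by rewrite ler0q /rel_ratio divr_ge0.
  move=> k1 k2 [s1 [<- [s1_atoms s1z]]] [s2 [<- [s2_atoms s2z]]].
  have := rel_le_mx _ (relation_of_factorizations z_neq0 s1_atoms s2_atoms s1z s2z).
  by rewrite /= !(msize_mult atom_le) // -(ler_rat R) rmorphM /= !ratr_nat.
have [Hzm zm0 l1 l2] := relation_lengths min_mx.1.
apply: le_trans (ereal_sup_ubound (ex_intro2 _ _ _ (conj Hzm zm0) erefl)).
rewrite lee_fin; apply: le_trans (ratio_le_elast_elt R zm0 l1 l2).
by rewrite /rel_ratio fmorph_div /= !ratr_nat.
Qed.

End BoundedAtoms.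

Lemma gp_rank_nontrivial n (H : set {ffun 'I_n -> nat}) d : gp_rank_is H d -> (0 < d)%N ->
  exists2 z, H z & z <> vzero n.
Proof.
move=> [[[|v s] [<- [s_gp s_free]]] _] // _.
have [a Ha [b Hb ab]] := s_gp v (mem_head _ _).
have [a0|] := eqVneq a (vzero n); last by exists a => //; apply/eqP.
have [b0|] := eqVneq b (vzero n); last by exists b => //; apply/eqP.
by have := free_not0 s_free (mem_head _ _); rewrite -ab a0 b0 subrr eqxx.
Qed.

Theorem theorem5p8 (R : realType) (n d : nat) (H : set {ffun 'I_n -> nat}) :
  submonoid H ->
  gp_rank_is H d ->
  (3 <= d)%N ->
  polyhedral (cone_of H) ->
  elasticity R H = +oo%E \/ exists q : rat, elasticity R H = ((ratr q : R)%:E)%E.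
Proof.
move=> sH rank_d d_ge3 polyH.
have [z Hz z0] := gp_rank_nontrivial rank_d (leq_trans (isT : 0 < 3) d_ge3).
have [[B atom_le]|unbounded] := pselect (exists B, forall a, atom H a -> (vnorm a <= B)%N).
  by right; exact: (elasticity_bounded_atoms R sH atom_le Hz z0).
by left; exact: (elasticity_unbounded_atoms R sH polyH unbounded).
Qed.
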